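(* Let $p\ge1$, $m=2^p$, $U_m=\frac{1}{\sqrt m}H(m)$, and let two identical particles be injected in an arbitrary pair of distinct input modes $a<b$ (input state $(a,b)$). Then the number of suppressed output states $(i,j)$, $1\le i\le j\le m$, equals $m^2/4$ if the particles are bosons (fraction $\frac12\frac{m}{m+1}$), and equals $\frac12 m(m+1)-\frac{m^2}{4}$ if the particles are fermions (fraction $\frac12\frac{m+2}{m+1}$); i.e. the same numbers as for the input $(1,2)$.
   Context: For $m=2^p$, the Sylvester matrix $H(m)$ is defined recursively by $H(1)=[1]$ and $H(2^p)=\begin{bmatrix}H(2^{p-1})&H(2^{p-1})\\ H(2^{p-1})&-H(2^{p-1})\end{bmatrix}$, rows and columns indexed $1,\dots,m$. An $n$-particle state on $m$ modes is a nondecreasing tuple $\vec t=(t_1\le\dots\le t_n)$ with $t_i\in\{1,\dots,m\}$; $\mu_k(\vec t)=|\{i:t_i=k\}|$. For input $\vec s$ and output $\vec t$, the scattering matrix is $S_{i,j}=U_{t_i,s_j}$; the bosonic amplitude is $\mathrm{perm}\,S/\sqrt{\prod_k\mu_k(\vec s)!\prod_k\mu_k(\vec t)!}$ and the fermionic amplitude is $\det S/\sqrt{\prod_k\mu_k(\vec s)!\prod_k\mu_k(\vec t)!}$. An output state is suppressed if its amplitude is zero. *)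

From HB Require Import structures.
From mathcomp Require Import all_boot all_order all_algebra all_fingroup all_field.
Set Implicit Arguments. Unset Strict Implicit. Unset Printing Implicit Defensive.
Import Order.TTheory GRing.Theory Num.Theory.
Local Open Scope ring_scope.

(* Entries of the Sylvester matrix H(2^p), 0-indexed (paper index k = our k+1),
   following the recursive block definition
   H(2^p) = [[H(2^(p-1)), H(2^(p-1))], [H(2^(p-1)), -H(2^(p-1))]]. *)
Fixpoint sylv (p i j : nat) : int :=
  match p with
  | 0 => 1
  | p'.+1 =>
      let h := (2 ^ p')%N in
      if (i < h)%N then
        if (j < h)%N then sylv p' i j else sylv p' i (j - h)
      else
        if (j < h)%N then sylv p' (i - h) j else - sylv p' (i - h) (j - h)
  end.

Definition Sylvester (p : nat) : 'M[algC]_(2 ^ p) :=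
  \matrix_(i, j) (sylv p i j)%:~R.

Definition Umat (p : nat) : 'M[algC]_(2 ^ p) :=
  (sqrtC (2 ^ p)%:R)^-1 *: Sylvester p.

Definition is_state (n m : nat) (t : n.-tuple 'I_m) : bool :=
  sorted (fun x y : 'I_m => (x <= y)%N) t.

Definition mu (n m : nat) (k : 'I_m) (t : n.-tuple 'I_m) : nat := count_mem k t.

Definition scat (n m : nat) (U : 'M[algC]_m) (s t : n.-tuple 'I_m) : 'M[algC]_n :=
  \matrix_(i, j) U (tnth t i) (tnth s j).

Definition permanent (n : nat) (A : 'M[algC]_n) : algC :=
  \sum_(σ : 'S_n) \prod_(i < n) A i (σ i).

Definition normfac (n m : nat) (s t : n.-tuple 'I_m) : algC :=
  sqrtC ((\prod_(k < m) (mu k s)`! * \prod_(k < m) (mu k t)`!)%N)%:R.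

Definition boson_amp (n m : nat) (U : 'M[algC]_m) (s t : n.-tuple 'I_m) : algC :=
  permanent (scat U s t) / normfac s t.

Definition fermion_amp (n m : nat) (U : 'M[algC]_m) (s t : n.-tuple 'I_m) : algC :=
  \det (scat U s t) / normfac s t.

(** Put chi x := H(x,a) H(x,b), a sign.  For outputs x <= y the permanent and
    the determinant of the scattering matrix are proportional to
    H(x,a) H(y,b) +- H(x,b) H(y,a); as all entries are signs, the permanent
    vanishes iff chi x * chi y = -1 and the determinant iff chi x * chi y = 1.
    Distinct columns of H are orthogonal, i.e. chi sums to 0, so chi takes each
    sign m/2 times.  The suppressed outputs are counted by summing the indicator
    (1 -+ chi x * chi y) / 2 over the triangle x <= y, which only needs
    chi x * chi x = 1 and the vanishing of the sum of chi. *)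

From HB Require Import structures.
From mathcomp Require Import all_boot all_order all_algebra all_fingroup all_field.
From mathcomp Require Import ring zify.
Import Order.TTheory GRing.Theory Num.Theory.
Local Open Scope ring_scope.

Lemma sylv_mul_self p i j : sylv p i j * sylv p i j = 1.
Proof.
elim: p i j => [|p IH] i j //=.
by case: ifP => _; case: ifP => _; rewrite ?mulrNN IH.
Qed.

Lemma sylvS_top p x : (x < 2 ^ p)%N -> forall j,
  sylv p.+1 x j = if (j < 2 ^ p)%N then sylv p x j else sylv p x (j - 2 ^ p).
Proof. by move=> /= ->. Qed.

Lemma sylvS_bottom p x j :
  sylv p.+1 (x + 2 ^ p) j =
    if (j < 2 ^ p)%N then sylv p x j else - sylv p x (j - 2 ^ p).
Proof. by rewrite /= ltnNge leq_addl /= addnK. Qed.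

Lemma big_nat_double (R : nmodType) (F : nat -> R) h :
  \sum_(0 <= i < h + h) F i = \sum_(0 <= i < h) (F i + F (i + h)%N).
Proof.
rewrite big_split (@big_cat_nat _ _ _ h) ?leq_addr //=.
by congr (_ + _); rewrite -{1}(add0n h) big_addn addnK.
Qed.

Lemma sylv_col_orthogonal p a b : (a < 2 ^ p)%N -> (b < 2 ^ p)%N -> a != b ->
  \sum_(0 <= x < 2 ^ p) sylv p x a * sylv p x b = 0.
Proof.
elim: p a b => [|p IH] a b ha hb neq_ab.
  by move: ha hb neq_ab; rewrite expn0 !ltnS !leqn0 => /eqP-> /eqP->.
have e2 : (2 ^ p.+1 = 2 ^ p + 2 ^ p)%N by rewrite expnS mul2n addnn.
rewrite e2 big_nat_double.
under eq_big_nat => x /andP[_ hx] do rewrite !(sylvS_top _ _ hx) !sylvS_bottom.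
have lt_sub j : (2 ^ p <= j)%N -> (j < 2 ^ p.+1)%N -> (j - 2 ^ p < 2 ^ p)%N.
  by move=> hj; rewrite e2 -ltn_subLR.
case: ltnP => ha'; case: ltnP => hb'.
- by rewrite big_split /= IH ?add0r.
- by rewrite big1 // => x _; rewrite mulrN subrr.
- by rewrite big1 // => x _; rewrite mulNr subrr.
- under eq_bigr => x _ do rewrite mulrNN.
  rewrite big_split /= IH ?addr0 ?lt_sub //.
  by apply: contra neq_ab => /eqP/(congr1 (addn^~ (2 ^ p)%N)); rewrite !subnK // => ->.
Qed.

Definition sylv_colprod p (a b x : nat) : int := sylv p x a * sylv p x b.

Lemma sylv_colprod_mul_self p a b x : sylv_colprod p a b x * sylv_colprod p a b x = 1.
Proof. by rewrite mulrACA !sylv_mul_self mulr1. Qed.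

Lemma sum_sylv_colprod p (a b : 'I_(2 ^ p)) : a != b ->
  \sum_(x < 2 ^ p) sylv_colprod p a b x = 0.
Proof. by move=> neq_ab; rewrite -(big_mkord xpredT) sylv_col_orthogonal. Qed.

Lemma ord2P (i : 'I_2) : i = 0 \/ i = 1.
Proof. by case: i => [[|[|//]] ?]; [left|right]; apply: val_inj. Qed.

Lemma perm_S2 (s : 'S_2) : s = 1%g \/ s = tperm 0 1.
Proof.
have s10 : s 1 != s 0 by rewrite (inj_eq perm_inj).
have [s0 | s0] := ord2P (s 0); [left | right]; apply/permP => i;
  rewrite ?perm1; have [-> | ->] := ord2P i; rewrite ?tpermL ?tpermR //;
  by have [s1 | s1] := ord2P (s 1); rewrite s1 s0 in s10 *.
Qed.

Lemma sum_S2 (R : nmodType) (F : 'S_2 -> R) :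
  \sum_(s : 'S_2) F s = F 1%g + F (tperm 0 1).
Proof.
rewrite (bigD1 1%g) // (bigD1 (tperm 0 1)) /=; last first.
  by apply/eqP => /permP/(_ 0); rewrite tpermL perm1.
rewrite big1 ?addr0 // => s /andP[s_neq1 s_neqt].
by have [s_eq | s_eq] := perm_S2 s; rewrite s_eq eqxx in s_neq1 s_neqt.
Qed.

Lemma big_ord2 (R : Type) (idx : R) (op : Monoid.law idx) (F : 'I_2 -> R) :
  \big[op/idx]_(i < 2) F i = op (F 0) (F 1).
Proof. by rewrite big_ord_recl big_ord1; congr (op _ (F _)); apply: val_inj. Qed.

Lemma permanent_mx22 (A : 'M[algC]_2) :
  permanent A = A 0 0 * A 1 1 + A 0 1 * A 1 0.
Proof. by rewrite /permanent sum_S2 !big_ord2 !perm1 tpermL tpermR. Qed.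

Lemma det_mx22 (R : comRingType) (A : 'M[R]_2) :
  \det A = A 0 0 * A 1 1 - A 0 1 * A 1 0.
Proof.
rewrite /determinant sum_S2 !big_ord2 !perm1 tpermL tpermR odd_perm1 odd_tperm /=.
by rewrite expr0 expr1 !mul1r mulN1r.
Qed.

Lemma int_signP (z : int) : z * z = 1 -> z = 1 \/ z = -1.
Proof. by move=> zz; have := sqrf_eq1 z; rewrite expr2 zz eqxx => /esym/orP[]/eqP; auto. Qed.

Lemma int_signs_add_eq0 (u v w z : int) :
  u * u = 1 -> v * v = 1 -> w * w = 1 -> z * z = 1 ->
  (u * z + v * w == 0) = (u * v * (w * z) == -1).
Proof. by do 4!move=> /int_signP[]->. Qed.

Lemma int_signs_sub_eq0 (u v w z : int) :
  u * u = 1 -> v * v = 1 -> w * w = 1 -> z * z = 1 ->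
  (u * z - v * w == 0) = (u * v * (w * z) == 1).
Proof. by do 4!move=> /int_signP[]->. Qed.

Lemma normfac_neq0 n m (s t : n.-tuple 'I_m) : normfac s t != 0.
Proof.
rewrite sqrtC_eq0 pnatr_eq0 muln_eq0 negb_or -!lt0n.
by rewrite !prodn_gt0 // => i; rewrite fact_gt0.
Qed.

Lemma scat_Umat p (s t : 2.-tuple 'I_(2 ^ p)) i j :
  scat (Umat p) s t i j = (sqrtC (2 ^ p)%:R)^-1 * (sylv p (tnth t i) (tnth s j))%:~R.
Proof. by rewrite !mxE. Qed.

Section TwoParticleAmplitudes.
Variables (p : nat) (a b : 'I_(2 ^ p)) (t : 2.-tuple 'I_(2 ^ p)).
Let chi x := sylv_colprod p a b x.

Lemma boson_amp_eq0 :
  (boson_amp (Umat p) [tuple a; b] t == 0) = (chi (tnth t 0) * chi (tnth t 1) == -1).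
Proof.
rewrite mulf_eq0 invr_eq0 (negbTE (normfac_neq0 _ _ _ _)) orbF permanent_mx22 !scat_Umat.
set c := (sqrtC _)^-1; set x := tnth t 0; set y := tnth t 1.
rewrite (_ : _ + _ = c * c * (sylv p x a * sylv p y b + sylv p x b * sylv p y a)%:~R);
  last by rewrite intrD !intrM /=; ring.
rewrite !mulf_eq0 orbb invr_eq0 sqrtC_eq0 pnatr_eq0 expn_eq0 /= intr_eq0.
by rewrite int_signs_add_eq0 ?sylv_mul_self.
Qed.

Lemma fermion_amp_eq0 :
  (fermion_amp (Umat p) [tuple a; b] t == 0) = (chi (tnth t 0) * chi (tnth t 1) == 1).
Proof.
rewrite mulf_eq0 invr_eq0 (negbTE (normfac_neq0 _ _ _ _)) orbF det_mx22 !scat_Umat.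
set c := (sqrtC _)^-1; set x := tnth t 0; set y := tnth t 1.
rewrite (_ : _ - _ = c * c * (sylv p x a * sylv p y b - sylv p x b * sylv p y a)%:~R);
  last by rewrite intrB !intrM /=; ring.
rewrite !mulf_eq0 orbb invr_eq0 sqrtC_eq0 pnatr_eq0 expn_eq0 /= intr_eq0.
by rewrite int_signs_sub_eq0 ?sylv_mul_self.
Qed.

End TwoParticleAmplitudes.

Lemma sum_triangle (R : zmodType) m (g : 'I_m -> 'I_m -> R) :
  (forall x y, g x y = g y x) ->
  (\sum_(x < m) \sum_(y < m | (x <= y)%N) g x y) *+ 2 =
    \sum_(x < m) \sum_(y < m) g x y + \sum_(x < m) g x x.
Proof.
move=> g_sym; rewrite mulr2n [X in _ + X](exchange_big_dep xpredT) //=.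
rewrite -!big_split /=; apply: eq_bigr => x _.
under [X in _ + X]eq_bigr => y _ do rewrite g_sym.
rewrite [in RHS](bigID (fun y : 'I_m => (x <= y)%N)) -addrA; congr (_ + _).
rewrite (bigD1 x) //= addrC; congr (_ + _).
by apply: eq_bigl => y; rewrite -ltnNge ltn_neqAle andbC.
Qed.

Section SignPairs.
Variables (m : nat) (chi : 'I_m -> int).
Hypothesis chi_sign : forall x, chi x * chi x = 1.
Hypothesis chi_sum0 : \sum_(x < m) chi x = 0.

Let pairs (eps : int) : nat :=
  \sum_(x < m) \sum_(y < m | (x <= y)%N) (chi x * chi y == eps)%R.

Lemma sign_pairs_mul4 (eps : int) : eps * eps = 1 ->
  (pairs eps)%:R *+ 4 = (m * m + m)%:R + eps *+ m :> int.
Proof.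
move=> eps_sign.
pose tri (g : 'I_m -> 'I_m -> int) := \sum_(x < m) \sum_(y < m | (x <= y)%N) g x y.
have indicator x y : ((chi x * chi y == eps) : nat)%:R *+ 2 = 1 + eps * (chi x * chi y).
  have cc : chi x * chi y * (chi x * chi y) = 1 by rewrite mulrACA !chi_sign mulr1.
  by case: (int_signP _ cc) => ->; case: (int_signP _ eps_sign) => ->.
have pairs2 : (pairs eps)%:R *+ 2 = tri (fun _ _ => 1) + eps * tri (fun x y => chi x * chi y).
  rewrite /pairs /tri natr_sum -sumrMnl mulr_sumr -big_split; apply: eq_bigr => x _.
  rewrite natr_sum -sumrMnl mulr_sumr -big_split; apply: eq_bigr => y _.
  exact: indicator.
have tri1 : tri (fun _ _ => 1) *+ 2 = (m * m + m)%:R.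
  by rewrite sum_triangle // !sumr_const card_ord natrD natrM mulr_natl.
have tri_chi : tri (fun x y => chi x * chi y) *+ 2 = m%:R.
  rewrite sum_triangle; last by move=> x y; rewrite mulrC.
  rewrite -(eq_bigr _ (fun x _ => mulr_sumr _ _ _ _)) -mulr_suml chi_sum0 mul0r add0r.
  by rewrite (eq_bigr _ (fun x _ => chi_sign x)) sumr_const card_ord.
by rewrite (_ : 4 = 2 * 2)%N // mulrnA pairs2 mulrnDl tri1 -mulrnAr tri_chi mulr_natr.
Qed.

Lemma opposite_sign_pairs : (4 * pairs (-1) = m * m)%N.
Proof.
apply/eqP; rewrite -(eqr_nat int) mulnC natrM mulr_natr sign_pairs_mul4 //.
by rewrite mulNrn natrD addrK.
Qed.

Lemma same_sign_pairs : (4 * pairs 1 = m * m + 2 * m)%N.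
Proof.
apply/eqP; rewrite -(eqr_nat int) mulnC natrM mulr_natr sign_pairs_mul4 ?mulr1 //.
by rewrite -natrD -addnA addnn -mul2n.
Qed.

End SignPairs.

Lemma card_sorted_pairs m (Q : 'I_m -> 'I_m -> bool) :
  #|[set t : 2.-tuple 'I_m | is_state t && Q (tnth t 0) (tnth t 1)]| =
    (\sum_(x < m) \sum_(y < m | x <= y) Q x y)%N.
Proof.
rewrite -sum1dep_card.
rewrite (reindex (fun xy : 'I_m * 'I_m => [tuple xy.1; xy.2])) /=; last first.
  exists (fun t => (tnth t 0, tnth t 1)) => [[x y] _ //|t _].
  by apply: eq_from_tnth => i; case: (ord2P i) => ->.
rewrite pair_big_dep big_mkcond [RHS]big_mkcond; apply: eq_bigr => -[x y] _ /=.
by rewrite /is_state /= andbT; case: (x <= y)%N; case: (Q x y).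
Qed.

Theorem proposition3 (p : nat) (hp : (0 < p)%N) (a b : 'I_(2 ^ p))
    (hab : (a < b)%N) :
  let m := (2 ^ p)%N in
  let s : 2.-tuple 'I_(2 ^ p) := [tuple a; b] in
  #|[set t : 2.-tuple 'I_(2 ^ p) | is_state t && (boson_amp (Umat p) s t == 0)]|
    = (m ^ 2 %/ 4)%N
  /\
  #|[set t : 2.-tuple 'I_(2 ^ p) | is_state t && (fermion_amp (Umat p) s t == 0)]|
    = ((m * (m + 1)) %/ 2 - m ^ 2 %/ 4)%N.
Proof.
move=> m s.
pose chi (x : 'I_(2 ^ p)) := sylv_colprod p a b x.
have chi_sign (x : 'I_(2 ^ p)) : chi x * chi x = 1 := sylv_colprod_mul_self p a b x.
have chi_sum0 : \sum_(x < 2 ^ p) chi x = 0 by rewrite sum_sylv_colprod // -val_eqE ltn_eqF.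
split.
- under eq_finset => t do rewrite boson_amp_eq0.
  rewrite (card_sorted_pairs _ (fun x y => chi x * chi y == -1)).
  by rewrite -mulnn -(opposite_sign_pairs _ _ chi_sign chi_sum0) mulKn.
- under eq_finset => t do rewrite fermion_amp_eq0.
  rewrite (card_sorted_pairs _ (fun x y => chi x * chi y == 1)).
  have := same_sign_pairs _ _ chi_sign chi_sum0.
  set F := (\sum_(x < 2 ^ p) _)%N; clearbody F; rewrite /m.
  have -> : (2 ^ p = 2 * 2 ^ p.-1)%N by rewrite -expnS prednK.
  lia.
Qed.
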